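(* Let $\mathcal J$ be a generalized almost complex structure on a Courant algebroid $E$ and $D$ a generalized connection with $D\mathcal J=0$. Then for all $u,v,w\in\Gamma(E)$, $$T^D(u,v,w)-T^D(\mathcal Ju,v,\mathcal Jw)-T^D(u,\mathcal Jv,\mathcal Jw)-T^D(\mathcal Ju,\mathcal Jv,w)=N_{\mathcal J}(u,v,w).$$ In particular, identifying $\Lambda^3E^*/\mathrm{im}\,\partial_{\mathcal J}$ with $\mathrm{im}\,\Pi_{\mathcal J}=\Lambda^3_{\mathcal J}E^*$, the intrinsic torsion of $\mathcal J$ equals $t_{\mathcal J}=\frac14N_{\mathcal J}$ (viewed as 3-forms on $E$).
   Context: A Courant algebroid on $M$ is a real vector bundle $E\to M$ with nondegenerate symmetric bilinear form $\langle\cdot,\cdot\rangle$, an $\mathbb R$-bilinear bracket $[\cdot,\cdot]$ on $\Gamma(E)$ and bundle map $\pi:E\to TM$ such that for $u,v,w\in\Gamma(E)$, $f\in C^\infty(M)$: $[u,[v,w]]=[[u,v],w]+[v,[u,w]]$; $\pi([u,v])=[\pi(u),\pi(v)]$; $[u,fv]=\pi(u)(f)v+f[u,v]$; $\pi(u)\langle v,w\rangle=\langle[u,v],w\rangle+\langle v,[u,w]\rangle$; $2\langle[u,u],v\rangle=\pi(v)\langle u,u\rangle$. A generalized connection is an $\mathbb R$-linear $D:\Gamma(E)\to\Gamma(E^*\otimes E)$ with $D_u(fv)=\pi(u)(f)v+fD_uv$ and $\pi(u)\langle v,w\rangle=\langle D_uv,w\rangle+\langle v,D_uw\rangle$; its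 torsion is $T^D(u,v)=D_uv-D_vu-[u,v]+(Du)^*v$ ($(Du)^*$ adjoint of $w\mapsto D_wu$), and $T^D(u,v,w)=\langle T^D(u,v),w\rangle$ (a 3-form). A generalized almost complex structure is a $\langle\cdot,\cdot\rangle$-orthogonal $\mathcal J$ with $\mathcal J^2=-\mathrm{Id}$; $N_{\mathcal J}(u,v)=[\mathcal Ju,\mathcal Jv]-[u,v]-\mathcal J([\mathcal Ju,v]+[u,\mathcal Jv])$ and $N_{\mathcal J}(u,v,w)=\langle N_{\mathcal J}(u,v),w\rangle$ (a 3-form). $\Lambda^{1,1}_{\mathcal J}E^*$ is the bundle of $\mathcal J$-invariant 2-forms; $\partial_{\mathcal J}:E^*\otimes\Lambda^{1,1}_{\mathcal J}E^*\to\Lambda^3E^*$, $(\partial_{\mathcal J}\eta)(u,v,w)=\eta(u,v,w)+\eta(w,u,v)+\eta(v,w,u)$. $\Pi_{\mathcal J}$ is the projector $(\Pi_{\mathcal J}\alpha)(u,v,w)=\frac14(\alpha(u,v,w)-\alpha(u,\mathcal Jv,\mathcal Jw)-\alpha(\mathcal Ju,v,\mathcal Jw)-\alpha(\mathcal Ju,\mathcal Jv,w))$ onto $\Lambda^3_{\mathcal J}E^*=\{\alpha:\alpha(\mathcal Ju,v,w)=\alpha(u,\mathcal Jv,w)=\alpha(u,v,\mathcal Jw)\}$, whose kernel is $\mathrm{im}\,\partial_{\mathcal J}$. The intrinsic torsion of $\mathcal J$ is the class of $T^D$ in $\Lambda^3E^*/\mathrm{im}\,\partial_{\mathcal J}$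 for any generalized connection $D$ with $D\mathcal J=0$; under the identification above it is $\Pi_{\mathcal J}(T^D)$. *)

(* Algebraic model of a Courant algebroid:
   A  plays the role of C^oo(M) (a commutative R-algebra, R a real field),
   S  plays the role of Gamma(E) (an A-module),
   anchor u : A -> A is the vector field pi(u) acting as a derivation of A. *)
From HB Require Import structures.
From mathcomp Require Import all_boot all_order all_algebra.
Set Implicit Arguments. Unset Strict Implicit. Unset Printing Implicit Defensive.
Import Order.TTheory GRing.Theory Num.Theory.
Local Open Scope ring_scope.

Record courant (R : realFieldType) (A : comAlgType R) (S : lmodType A) := Courant {
  cpair : S -> S -> A;
  cbr : S -> S -> S;                   (* Dorfman bracket [.,.] *)
  anchor : S -> A -> A;
  cpair_sym : forall u v, cpair u v = cpair v u;
  cpair_addl : forall u v w, cpair (u + v) w = cpair u w + cpair v w;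
  cpair_scalel : forall (f : A) u v, cpair (f *: u) v = f * cpair u v;
  cpair_nondeg : forall u, (forall v, cpair u v = 0) -> u = 0;
  anchor_addl : forall u v f, anchor (u + v) f = anchor u f + anchor v f;
  anchor_scalel : forall (g : A) u f, anchor (g *: u) f = g * anchor u f;
  anchor_add : forall u f g, anchor u (f + g) = anchor u f + anchor u g;
  anchor_scaleR : forall u (r : R) f, anchor u (r *: f) = r *: anchor u f;
  anchor_mul : forall u f g, anchor u (f * g) = anchor u f * g + f * anchor u g;
  cbr_addl : forall u v w, cbr (u + v) w = cbr u w + cbr v w;
  cbr_addr : forall u v w, cbr u (v + w) = cbr u v + cbr u w;
  cbr_scaleRl : forall (r : R) u v, cbr ((r%:A : A) *: u) v = (r%:A : A) *: cbr u v;
  cbr_scaleRr : forall (r : R) u v, cbr u ((r%:A : A) *: v) = (r%:A : A) *: cbr u v;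
  cbr_jacobi : forall u v w, cbr u (cbr v w) = cbr (cbr u v) w + cbr v (cbr u w);
  anchor_br : forall u v f,
    anchor (cbr u v) f = anchor u (anchor v f) - anchor v (anchor u f);
  cbr_leibniz : forall u v (f : A), cbr u (f *: v) = anchor u f *: v + f *: cbr u v;
  cbr_invariance : forall u v w,
    anchor u (cpair v w) = cpair (cbr u v) w + cpair v (cbr u w);
  cbr_sym : forall u v, 2%:R * cpair (cbr u u) v = anchor v (cpair u u)
}.

(* generalized connection: D u v = D_u v *)
Record genconn (R : realFieldType) (A : comAlgType R) (S : lmodType A)
    (C : courant S) := GenConn {
  cD : S -> S -> S;
  cD_addl : forall u v w, cD (u + v) w = cD u w + cD v w;
  cD_scalel : forall (f : A) u v, cD (f *: u) v = f *: cD u v;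
  cD_addr : forall u v w, cD u (v + w) = cD u v + cD u w;
  cD_scaleRr : forall (r : R) u v, cD u ((r%:A : A) *: v) = (r%:A : A) *: cD u v;
  cD_leibniz : forall u v (f : A), cD u (f *: v) = anchor C u f *: v + f *: cD u v;
  cD_metric : forall u v w,
    anchor C u (cpair C v w) = cpair C (cD u v) w + cpair C v (cD u w)
}.

Record gacs (R : realFieldType) (A : comAlgType R) (S : lmodType A)
    (C : courant S) := GACS {
  cJ : {linear S -> S};
  cJ_sq : forall u, cJ (cJ u) = - u;
  cJ_orth : forall u v, cpair C (cJ u) (cJ v) = cpair C u v
}.

Section Defs.
Variables (R : realFieldType) (A : comAlgType R) (S : lmodType A) (C : courant S).

(* T^D(u,v,w) = < D_u v - D_v u - [u,v] + (Du)^* v , w >,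
   where < (Du)^* v, w > = < v, D_w u > *)
Definition torsion3 (D : genconn C) (u v w : S) : A :=
  cpair C (cD D u v - cD D v u - cbr C u v) w + cpair C v (cD D w u).

Definition nijenhuis (J : gacs C) (u v : S) : S :=
  cbr C (cJ J u) (cJ J v) - cbr C u v
  - cJ J (cbr C (cJ J u) v + cbr C u (cJ J v)).

Definition nijenhuis3 (J : gacs C) (u v w : S) : A := cpair C (nijenhuis J u v) w.

Definition parallel (D : genconn C) (J : gacs C) : Prop :=
  forall u v, cD D u (cJ J v) = cJ J (cD D u v).

(* Pi_J on 3-forms (given as functions S -> S -> S -> A) *)
Definition PiJ (J : gacs C) (al : S -> S -> S -> A) (u v w : S) : A :=
  ((4%:R : R)^-1)%:A * (al u v w - al u (cJ J v) (cJ J w)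
     - al (cJ J u) v (cJ J w) - al (cJ J u) (cJ J v) w).

End Defs.

(* The connection part of T^D is built, by slot permutations, from the form
   (x, y, z) |-> <D_x y, z>, which is J-invariant in (y, z) because D J = 0 and J
   is orthogonal; the J-twisted sum below annihilates every such form.  Only the
   bracket part -<[u, v], w> survives, and its J-twisted sum is N_J. *)
From HB Require Import structures.
From mathcomp Require Import all_boot all_order all_algebra.
From mathcomp Require Import ring.
Set Implicit Arguments. Unset Strict Implicit. Unset Printing Implicit Defensive.
Import Order.TTheory GRing.Theory Num.Theory.
Local Open Scope ring_scope.

Section Pairing.
Variables (R : realFieldType) (A : comAlgType R) (S : lmodType A) (C : courant S).

Lemma cpair_oppl u v : cpair C (- u) v = - cpair C u v.
Proof. by rewrite -scaleN1r cpair_scalel mulN1r. Qed.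

Lemma cpair_oppr u v : cpair C u (- v) = - cpair C u v.
Proof. by rewrite cpair_sym cpair_oppl cpair_sym. Qed.

Lemma cpair_subl u v w : cpair C (u - v) w = cpair C u w - cpair C v w.
Proof. by rewrite cpair_addl cpair_oppl. Qed.

Lemma cpair_Jl (J : gacs C) u v : cpair C (cJ J u) v = - cpair C u (cJ J v).
Proof. by rewrite -(cJ_orth J u) cJ_sq cpair_oppr opprK. Qed.

End Pairing.

Section JTwist.
Variables (R : realFieldType) (A : comAlgType R) (S : lmodType A) (C : courant S).
Variable J : gacs C.

Definition Jtwist (al : S -> S -> S -> A) u v w : A :=
  al u v w - al (cJ J u) v (cJ J w) - al u (cJ J v) (cJ J w)
  - al (cJ J u) (cJ J v) w.

Lemma eq_Jtwist al be : (forall x y z, al x y z = be x y z) ->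
  forall u v w, Jtwist al u v w = Jtwist be u v w.
Proof. by move=> eq_al_be u v w; rewrite /Jtwist !eq_al_be. Qed.

Lemma JtwistD al be u v w :
  Jtwist (fun x y z => al x y z + be x y z) u v w
  = Jtwist al u v w + Jtwist be u v w.
Proof. rewrite /Jtwist /=; ring. Qed.

Lemma JtwistB al be u v w :
  Jtwist (fun x y z => al x y z - be x y z) u v w
  = Jtwist al u v w - Jtwist be u v w.
Proof. rewrite /Jtwist /=; ring. Qed.

Lemma PiJE al u v w : PiJ J al u v w = ((4%:R : R)^-1)%:A * Jtwist al u v w.
Proof. by rewrite /PiJ /Jtwist; congr (_ * (_ - _)); rewrite addrAC. Qed.

Section InvariantForm.
Variable be : S -> S -> S -> A.
Hypothesis be_Jskew : forall x y z, be x (cJ J y) z = - be x y (cJ J z).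
Hypothesis be_JJ : forall x y z, be x (cJ J y) (cJ J z) = be x y z.

Lemma Jtwist_invariant_form u v w : Jtwist be u v w = 0.
Proof. rewrite /Jtwist be_JJ be_Jskew; ring. Qed.

Lemma Jtwist_invariant_form_swap u v w :
  Jtwist (fun x y z => be y x z) u v w = 0.
Proof. rewrite /Jtwist be_JJ be_Jskew; ring. Qed.

Lemma Jtwist_invariant_form_cycle u v w :
  Jtwist (fun x y z => be z x y) u v w = 0.
Proof. rewrite /Jtwist be_JJ be_Jskew; ring. Qed.

End InvariantForm.

Lemma nijenhuis3E u v w :
  nijenhuis3 J u v w = - Jtwist (fun x y z => cpair C (cbr C x y) z) u v w.
Proof.
rewrite /nijenhuis3 /nijenhuis /Jtwist !cpair_subl cpair_Jl.
by rewrite cpair_addl; ring.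
Qed.

End JTwist.

Section Torsion.
Variables (R : realFieldType) (A : comAlgType R) (S : lmodType A) (C : courant S).
Variable D : genconn C.

Definition connection_form x y z : A := cpair C (cD D x y) z.

Lemma torsion3E u v w : torsion3 D u v w =
  connection_form u v w - connection_form v u w + connection_form w u v
  - cpair C (cbr C u v) w.
Proof.
rewrite /torsion3 /connection_form !cpair_addl !cpair_oppl.
by rewrite (cpair_sym _ v); ring.
Qed.

Variable J : gacs C.
Hypothesis DJ : parallel D J.

Lemma connection_form_Jskew x y z :
  connection_form x (cJ J y) z = - connection_form x y (cJ J z).
Proof. by rewrite /connection_form DJ cpair_Jl. Qed.

Lemma connection_form_JJ x y z :
  connection_form x (cJ J y) (cJ J z) = connection_form x y z.
Proof. by rewrite /connection_form DJ cJ_orth. Qed.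

Lemma Jtwist_torsion3 u v w : Jtwist J (torsion3 D) u v w = nijenhuis3 J u v w.
Proof.
have [sk inv] := (connection_form_Jskew, connection_form_JJ).
rewrite (eq_Jtwist J torsion3E) JtwistB JtwistD JtwistB.
rewrite (Jtwist_invariant_form sk inv) (Jtwist_invariant_form_swap sk inv).
by rewrite (Jtwist_invariant_form_cycle sk inv) subrr add0r sub0r nijenhuis3E.
Qed.

End Torsion.

Theorem corollary3p3 (R : realFieldType) (A : comAlgType R) (S : lmodType A)
    (C : courant S) (J : gacs C) (D : genconn C) :
  parallel D J ->
  (forall u v w : S,
     torsion3 D u v w - torsion3 D (cJ J u) v (cJ J w)
     - torsion3 D u (cJ J v) (cJ J w) - torsion3 D (cJ J u) (cJ J v) w
     = nijenhuis3 J u v w)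
  /\
  (forall u v w : S,
     PiJ J (torsion3 D) u v w = ((4%:R : R)^-1)%:A * nijenhuis3 J u v w).
Proof.
move=> DJ; split=> u v w; first exact: Jtwist_torsion3.
by rewrite PiJE Jtwist_torsion3.
Qed.
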